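(* Let $\Omega\subset\mathbb{R}^2$ be a bounded domain and $X\subset\overline{\Omega}$ a finite set with $X\setminus\partial\Omega\subset\mathrm{int}(\mathrm{conv}(X\cap\partial\Omega))$. Then $(\mathcal{P}_X)$ and $(\mathcal{P}_X^* )$ are mutually dual conic quadratic problems, both admit solutions, and $$\mathcal{Z}_X:=\min\mathcal{P}_X=\max\mathcal{P}_X^*<\infty.$$ Moreover, for $(\mathbf{s},\mathbf{q})\in\mathbb{R}^m_+\times\mathbb{R}^m$ and $(\mathbf{u}_1,\mathbf{u}_2,\mathbf{w})\in(\mathbb{R}^n)^3$: $(\mathbf{s},\mathbf{q})$ (completed by some $\mathbf{r}$) solves $(\mathcal{P}_X)$ and $(\mathbf{u}_1,\mathbf{u}_2,\mathbf{w})$ (completed by some $\mathbf{t}_1,\mathbf{t}_2,\mathbf{t}_3$) solves $(\mathcal{P}_X^* )$ if and only if: (i) $\frac14((\mathbf{D}\mathbf{w})_k)^2/l_k+(\mathbf{B}_1\mathbf{u}_1+\mathbf{B}_2\mathbf{u}_2)_k\le l_k$ for every $k$; (ii) $\mathbf{B}_1^\top\mathbf{s}=\mathbf{0}$, $\mathbf{B}_2^\top\mathbf{s}=\mathbf{0}$, $\mathbf{D}^\top\mathbf{q}=\mathbf{f}$; (iii) $\frac14((\mathbf{D}\mathbf{w})_k)^2/l_k+(\mathbf{B}_1\mathbf{u}_1+\mathbf{B}_2\mathbf{u}_2)_k=l_k$ for each $k$ with $s_k\ne0$; (iv) $q_k=\frac12 s_k(\mathbf{D}\mathbf{w})_k/l_k$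 for every $k$.
   Context: Discrete setting: let $\bar n=\#X$, $n=\#(X\setminus\partial\Omega)$, fix an enumeration $\chi:\{1,\dots,n\}\to X\setminus\partial\Omega$, let $m=\bar n(\bar n-1)/2$ and fix an enumeration $k\mapsto\{\chi_-(k),\chi_+(k)\}$ of all unordered pairs of distinct points of $X$. A discrete load is a signed measure $f_X$ supported on $X$; $\mathbf{f}\in\mathbb{R}^n$, $f_i=f_X(\{\chi(i)\})$. $\mathbf{l}\in\mathbb{R}^m$, $l_k=|\chi_+(k)-\chi_-(k)|$. Vectors $\mathbf{u}_1,\mathbf{u}_2,\mathbf{w}\in\mathbb{R}^n$ are identified with $u:X\to\mathbb{R}^2$, $w:X\to\mathbb{R}$ vanishing on $X\cap\partial\Omega$ via $(u_{1;i},u_{2;i})=u(\chi(i))$ (components in a fixed Cartesian basis) and $w_i=w(\chi(i))$. Matrices $\mathbf{B}_1,\mathbf{B}_2,\mathbf{D}\in\mathbb{R}^{m\times n}$ are defined by $(\mathbf{B}_1\mathbf{u}_1+\mathbf{B}_2\mathbf{u}_2)_k=(u(\chi_+(k))-u(\chi_-(k)))\cdot\frac{\chi_+(k)-\chi_-(k)}{l_k}$ and $(\mathbf{D}\mathbf{w})_k=w(\chi_+(k))-w(\chi_-(k))$. Rotated cone $\mathrm{K}=\{(t_1,t_2,t_3)\in\mathbb{R}^3:t_1,t_2\ge0,\ 2t_1t_2\ge t_3^2\}$; $(\mathbf{a},\mathbf{b},\mathbf{c})\in\mathrm{K}^m$ means $(a_k,b_k,c_k)\in\mathrm{K}$ for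 all $k$. $(\mathcal{P}_X)$: $\inf\{\mathbf{l}^\top\mathbf{s}+2\mathbf{l}^\top\mathbf{r}:\mathbf{s},\mathbf{r}\in\mathbb{R}^m_+,\mathbf{q}\in\mathbb{R}^m,\ \mathbf{B}_1^\top\mathbf{s}=\mathbf{0},\mathbf{B}_2^\top\mathbf{s}=\mathbf{0},\mathbf{D}^\top\mathbf{q}=\mathbf{f},\ (\mathbf{r},\mathbf{s},\mathbf{q})\in\mathrm{K}^m\}$. $(\mathcal{P}_X^* )$: $\sup\{\mathbf{f}^\top\mathbf{w}:\mathbf{u}_1,\mathbf{u}_2,\mathbf{w}\in\mathbb{R}^n,\ \mathbf{t}_1,\mathbf{t}_2\in\mathbb{R}^m_+,\mathbf{t}_3\in\mathbb{R}^m,\ \mathbf{t}_2+\mathbf{B}_1\mathbf{u}_1+\mathbf{B}_2\mathbf{u}_2=\mathbf{l},\ \mathbf{t}_3+\mathbf{D}\mathbf{w}=\mathbf{0},\ \mathbf{t}_1=2\mathbf{l},\ (\mathbf{t}_1,\mathbf{t}_2,\mathbf{t}_3)\in\mathrm{K}^m\}$. *)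

From HB Require Import structures.
From mathcomp Require Import all_boot all_order all_algebra.
From mathcomp Require Import all_classical all_reals all_analysis.
Set Implicit Arguments. Unset Strict Implicit. Unset Printing Implicit Defensive.
Import Order.TTheory GRing.Theory Num.Theory.
Import numFieldNormedType.Exports.
Local Open Scope classical_set_scope.
Local Open Scope ring_scope.

Section Defs.
Variable R : realType.
Notation pt2 := (R * R)%type.

Definition bdry (A : set pt2) : set pt2 := closure A `\` interior A.

Definition conv_hull (A : set pt2) : set pt2 :=
  [set x | exists (k : nat) (c : 'I_k -> R) (a : 'I_k -> pt2),
      (forall i, 0 <= c i) /\ \sum_(i < k) c i = 1 /\ (forall i, A (a i)) /\
      x = (\sum_(i < k) c i * (a i).1, \sum_(i < k) c i * (a i).2)].

Definition edist (x y : pt2) : R :=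
  Num.sqrt ((x.1 - y.1) ^+ 2 + (x.2 - y.2) ^+ 2).

Variables (nbar n m : nat) (p : 'I_nbar -> pt2) (chi : 'I_n -> 'I_nbar)
          (chm chp : 'I_m -> 'I_nbar).

Definition lvec : 'cV[R]_m := \col_k edist (p (chp k)) (p (chm k)).

(* incidence coefficient: u(chi_+(k)) - u(chi_-(k)) as a function of the
   interior unknown attached to chi(i) (u vanishes on boundary points) *)
Definition inc (k : 'I_m) (i : 'I_n) : R :=
  (chp k == chi i)%:R - (chm k == chi i)%:R.

Definition Bmat1 : 'M[R]_(m, n) :=
  \matrix_(k, i) (inc k i * ((p (chp k)).1 - (p (chm k)).1) / lvec k 0).
Definition Bmat2 : 'M[R]_(m, n) :=
  \matrix_(k, i) (inc k i * ((p (chp k)).2 - (p (chm k)).2) / lvec k 0).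
Definition Dmat : 'M[R]_(m, n) := \matrix_(k, i) inc k i.

Definition inK (t1 t2 t3 : R) : Prop := 0 <= t1 /\ 0 <= t2 /\ t3 ^+ 2 <= 2 * t1 * t2.

Definition nonneg {k} (v : 'cV[R]_k) : Prop := forall i, 0 <= v i 0.

Definition dotv {k} (a b : 'cV[R]_k) : R := \sum_i a i 0 * b i 0.

Variable f : 'cV[R]_n.

Definition P_feas (s r q : 'cV[R]_m) : Prop :=
  nonneg s /\ nonneg r /\
  Bmat1^T *m s = 0 /\ Bmat2^T *m s = 0 /\ Dmat^T *m q = f /\
  (forall k, inK (r k 0) (s k 0) (q k 0)).
Definition P_obj (s r : 'cV[R]_m) : R := dotv lvec s + 2 * dotv lvec r.
Definition P_opt (s r q : 'cV[R]_m) : Prop :=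
  P_feas s r q /\
  forall s' r' q', P_feas s' r' q' -> P_obj s r <= P_obj s' r'.

Definition D_feas (u1 u2 w : 'cV[R]_n) (t1 t2 t3 : 'cV[R]_m) : Prop :=
  nonneg t1 /\ nonneg t2 /\
  t2 + Bmat1 *m u1 + Bmat2 *m u2 = lvec /\ t3 + Dmat *m w = 0 /\
  t1 = 2%:R *: lvec /\
  (forall k, inK (t1 k 0) (t2 k 0) (t3 k 0)).
Definition D_obj (w : 'cV[R]_n) : R := dotv f w.
Definition D_opt (u1 u2 w : 'cV[R]_n) (t1 t2 t3 : 'cV[R]_m) : Prop :=
  D_feas u1 u2 w t1 t2 t3 /\
  forall u1' u2' w' t1' t2' t3', D_feas u1' u2' w' t1' t2' t3' ->
    D_obj w' <= D_obj w.

End Defs.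

From mathcomp Require Import all_boot all_order all_algebra.
From mathcomp Require Import all_classical all_reals all_analysis.
From mathcomp Require Import ring lra.
Import Order.TTheory GRing.Theory Num.Theory.
Import numFieldNormedType.Exports.
Local Open Scope classical_set_scope.
Local Open Scope ring_scope.

Set Implicit Arguments.
Unset Strict Implicit.
Unset Printing Implicit Defensive.

(* For (r, s, q) in the rotated cone and a dual point satisfying (i), the gap
   l s + 2 l r - s a - q d of each edge (a and d being the entries of B1 u1 + B2 u2 and D w)
   is nonnegative by a sum-of-squares identity, and it vanishes exactly under (iii) and (iv).
   Under (ii) the primal value minus the dual value is the sum of these gaps, so KKT points are
   optimal pairs with equal values, and any optimal pair has zero gap once a KKT point exists.
   A KKT point comes from a dual maximiser: the dual feasible set is compact, since each interior
   node x lies inside the convex hull of the boundary nodes y, and the constraint of the edge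
   from x to y bounds u(x).(x - y) from above; the multipliers then come from Farkas' lemma,
   the origin being a strictly feasible point. *)

Section Farkas.
Variables (R : realFieldType) (Y : lmodType R).
Implicit Types (psi : Y -> R) (y : Y).

Lemma scalar_lincomb psi1 psi2 (a b : R) : scalar psi1 -> scalar psi2 ->
  scalar (fun y => a * psi1 y - b * psi2 y).
Proof. by move=> L1 L2 c y z; rewrite L1 L2; ring. Qed.

Lemma scalarN psi y : scalar psi -> psi (- y) = - psi y.
Proof. by move=> L; rewrite -scaleN1r (scalable_linear L) /= mulN1r. Qed.

Definition coef_cons p (c : R) (lam : 'I_p -> R) (i : 'I_p.+1) : R :=
  if unlift ord0 i is Some j then lam j else c.

Lemma coef_cons_ge0 p c (lam : 'I_p -> R) :
  0 <= c -> (forall j, 0 <= lam j) -> forall i, 0 <= coef_cons c lam i.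
Proof. by move=> c_ge0 lam_ge0 i; rewrite /coef_cons; case: unliftP. Qed.

Lemma sum_coef_cons p c (lam : 'I_p -> R) (F : 'I_p.+1 -> R) :
  \sum_i coef_cons c lam i * F i = c * F ord0 + \sum_j lam j * F (lift ord0 j).
Proof.
by rewrite big_ord_recl /coef_cons unlift_none; under eq_bigr do rewrite liftK.
Qed.

Lemma farkas p (phi : 'I_p -> Y -> R) psi :
  (forall i, scalar (phi i)) -> scalar psi ->
  (exists2 lam : 'I_p -> R, (forall i, 0 <= lam i) &
     forall y, psi y = \sum_i lam i * phi i y) \/
  (exists2 y, (forall i, phi i y <= 0) & 0 < psi y).
Proof.
elim: p => [|p IHp] in phi psi * => Lphi Lpsi.
  have [psi0|/existsNP[y /eqP psiy]] := pselect (forall y, psi y = 0).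
    by left; exists (fun=> 0) => // y; rewrite big_ord0.
  right; have [psiy_lt0|psiy_gt0] := ltrP (psi y) 0.
    by exists (- y); [case | rewrite scalarN // oppr_gt0].
  by exists y; [case | rewrite lt_def psiy psiy_gt0].
pose phi' j := phi (lift ord0 j).
have [[lam lam_ge0 psiE]|[y phi'y psiy]] := IHp phi' psi (fun j => Lphi _) Lpsi.
  left; exists (coef_cons 0 lam); first exact: coef_cons_ge0.
  by move=> y; rewrite sum_coef_cons mul0r add0r.
have [phi0y_le0|phi0y_gt0] := lerP (phi ord0 y) 0.
  by right; exists y => // i; case: (unliftP ord0 i) => [j ->|->] //; apply: phi'y.
(* Restrict to the hyperplane [phi ord0 = 0] through the projection along [y]. *)
set c := phi ord0 y; have c_neq0 : c != 0 by rewrite lt0r_neq0.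
pose proj (g : Y -> R) z := c * g z - g y * phi ord0 z.
have Lproj g : scalar g -> scalar (proj g) by move=> Lg; apply: scalar_lincomb.
have [[mu mu_ge0 psiE]|[z phiz psiz]] :=
  IHp (fun j => proj (phi' j)) (proj psi) (fun j => Lproj _ (Lphi _)) (Lproj _ Lpsi).
  left; exists (coef_cons ((psi y - \sum_j mu j * phi' j y) / c) mu).
    apply: coef_cons_ge0 => //; apply: divr_ge0; last exact: ltW.
    rewrite subr_ge0 (le_trans _ (ltW psiy)) // -oppr_ge0 -sumrN.
    by apply: sumr_ge0 => j _; rewrite -mulrN mulr_ge0 ?oppr_ge0.
  move=> x; rewrite sum_coef_cons; apply: (mulfI c_neq0).
  have := psiE x; rewrite /proj.
  have -> : \sum_j mu j * (c * phi' j x - phi' j y * phi ord0 x) =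
      c * (\sum_j mu j * phi' j x) - (\sum_j mu j * phi' j y) * phi ord0 x.
    by rewrite mulr_sumr mulr_suml -sumrB; apply: eq_bigr => j _; ring.
  by move=> psixE; rewrite mulrDr mulrA mulrCA divff // mulr1 -/c; lra.
right; exists (z - (phi ord0 z / c) *: y).
  move=> i; rewrite (zmod_morphism_linear (Lphi _)) (scalable_linear (Lphi _)) /=.
  case: (unliftP ord0 i) => [j ->|->]; last by rewrite -/c divfK // subrr.
  have -> : phi (lift ord0 j) z - phi ord0 z / c * phi (lift ord0 j) y
      = proj (phi' j) z / c by rewrite /proj /phi'; field.
  by rewrite ler_pdivrMr // mul0r.
rewrite (zmod_morphism_linear Lpsi) (scalable_linear Lpsi) /=.
have -> : psi z - phi ord0 z / c * psi y = proj psi z / c by rewrite /proj; field.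
exact: divr_gt0.
Qed.

Lemma farkas_strict p (P : pred 'I_p) (phi : 'I_p -> Y -> R) psi y0 :
  (forall i, scalar (phi i)) -> scalar psi -> (forall i, P i -> phi i y0 < 0) ->
  (exists2 lam : 'I_p -> R, (forall i, 0 <= lam i) &
     forall y, psi y = \sum_(i | P i) lam i * phi i y) \/
  (exists2 y, (forall i, P i -> phi i y < 0) & 0 < psi y).
Proof.
move=> Lphi Lpsi phiy0.
pose phiP i y := if P i then phi i y else 0.
have LphiP i : scalar (phiP i).
  by rewrite /phiP; case: (P i) => // a y z; rewrite mulr0 addr0.
have [[lam lam_ge0 psiE]|[y phiy psiy]] := @farkas _ phiP _ LphiP Lpsi.
  left; exists lam => // y; rewrite psiE [RHS]big_mkcond /=.
  by apply: eq_bigr => i _; rewrite /phiP; case: (P i); rewrite ?mulr0.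
(* Push [y] slightly along the strictly feasible direction [y0]. *)
pose eps := psi y / (2 * (`|psi y0| + 1)).
have eps_gt0 : 0 < eps by rewrite divr_gt0 // mulr_gt0 // ltr_wpDl.
right; exists (y + eps *: y0) => [i Pi|]; rewrite addrC.
  have := phiy i; rewrite /phiP Pi (Lphi i) => phiiy.
  by have := phiy0 i Pi; rewrite -(pmulr_rlt0 _ eps_gt0); lra.
rewrite Lpsi; have eps_psiy0 : eps * `|psi y0| < psi y.
  rewrite /eps mulrAC ltr_pdivrMr ?mulr_gt0 ?ltr_wpDl //.
  by rewrite ltr_pM2l //; have := normr_ge0 (psi y0); lra.
have := ler_wpM2l (ltW eps_gt0) (lerNnormlW (lexx `|psi y0|)); lra.
Qed.

End Farkas.

Section DotProduct.
Variable R : realType.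

Lemma dotvE k (a b : 'cV[R]_k) : dotv a b = (a^T *m b) 0 0.
Proof. by rewrite /dotv mxE; apply: eq_bigr => i _; rewrite mxE. Qed.

Lemma dotv_mulmx m n (A : 'M[R]_(m, n)) x y : dotv x (A *m y) = dotv (A^T *m x) y.
Proof. by rewrite !dotvE mulmxA trmx_mul trmxK. Qed.

Lemma dotvDr k (a b c : 'cV[R]_k) : dotv a (b + c) = dotv a b + dotv a c.
Proof. by rewrite !dotvE mulmxDr mxE. Qed.

Lemma dotv0l k (b : 'cV[R]_k) : dotv 0 b = 0.
Proof. by rewrite dotvE trmx0 mul0mx mxE. Qed.

Lemma dotv0r k (a : 'cV[R]_k) : dotv a 0 = 0.
Proof. by rewrite dotvE mulmx0 mxE. Qed.

Lemma dotv_scalar k (a : 'cV[R]_k) : scalar (dotv a).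
Proof. by move=> c x y; rewrite !dotvE mulmxDr -scalemxAr !mxE. Qed.

Lemma dotv_delta k (a : 'cV[R]_k) i : dotv a (delta_mx i 0) = a i 0.
Proof. by rewrite dotvE -colE !mxE. Qed.

Lemma dotv_inj k (a b : 'cV[R]_k) : (forall h, dotv a h = dotv b h) -> a = b.
Proof. by move=> ab; apply/colP => i; rewrite -!dotv_delta ab. Qed.

End DotProduct.

Section SecondOrderCone.
Variable R : realType.
Implicit Types l r s q d a t : R.

Definition cone_gap l r s q d a := l * s + 2 * l * r - s * a - q * d.

Lemma cone_gap_sos l r s q d a : l != 0 ->
  s * cone_gap l r s q d a = l * (2 * r * s - q ^+ 2)
    + s ^+ 2 * (l - (d ^+ 2 / (4 * l) + a)) + l * (q - s * d / (2 * l)) ^+ 2.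
Proof. by move=> l_neq0; rewrite /cone_gap; field; rewrite l_neq0. Qed.

Lemma cone_gap_ge0 l r s q d a : 0 < l -> inK r s q -> d ^+ 2 / (4 * l) + a <= l ->
  0 <= cone_gap l r s q d a.
Proof.
move=> l_gt0 [r_ge0 [s_ge0 qrs]] cstr; have [s_eq0|s_neq0] := eqVneq s 0.
  move: qrs; rewrite s_eq0 mulr0 => q2_le0.
  have /eqP -> : q == 0 by rewrite -sqrf_eq0 eq_le q2_le0 sqr_ge0.
  by rewrite /cone_gap !(mulr0, mul0r) add0r !subr0 !mulr_ge0 // ltW.
have s_gt0 : 0 < s by rewrite lt0r s_neq0.
rewrite -(pmulr_rge0 _ s_gt0) cone_gap_sos ?lt0r_neq0 //.
by do 2?apply: addr_ge0; apply: mulr_ge0; rewrite ?sqr_ge0 ?subr_ge0 // ltW.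
Qed.

Lemma cone_gap_eq0 l r s q d a : 0 < l -> inK r s q -> d ^+ 2 / (4 * l) + a <= l ->
  cone_gap l r s q d a = 0 ->
  (s != 0 -> d ^+ 2 / (4 * l) + a = l) /\ q = s * d / (2 * l).
Proof.
move=> l_gt0 [r_ge0 [s_ge0 qrs]] cstr gap0.
have := @cone_gap_sos l r s q d a (lt0r_neq0 l_gt0); rewrite gap0 mulr0.
set T1 := l * _; set T2 := s ^+ 2 * _; set T3 := l * _ => sos.
have T1_ge0 : 0 <= T1 by rewrite mulr_ge0 ?subr_ge0 // ltW.
have T2_ge0 : 0 <= T2 by rewrite mulr_ge0 ?sqr_ge0 ?subr_ge0.
have T3_ge0 : 0 <= T3 by rewrite mulr_ge0 ?sqr_ge0 // ltW.
have /eqP : T2 = 0 by lra.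
have /eqP : T3 = 0 by lra.
rewrite /T2 /T3 !mulf_eq0 (gt_eqF l_gt0) /= !orbb !subr_eq0.
move=> /eqP q_eq /orP[s_eq0|/eqP <-] //.
by split=> // /negPf; rewrite s_eq0.
Qed.

Lemma cone_gap_kkt l s q d a : 0 < l -> (s != 0 -> d ^+ 2 / (4 * l) + a = l) ->
  q = s * d / (2 * l) -> cone_gap l (q ^+ 2 / (2 * s)) s q d a = 0.
Proof.
move=> l_gt0 tight ->; have [->|s_neq0] := eqVneq s 0.
  by rewrite /cone_gap !(mul0r, mulr0, invr0, expr0n) /= !subr0 addr0.
have -> : a = l - d ^+ 2 / (4 * l) by have := tight s_neq0; lra.
by rewrite /cone_gap; field; rewrite s_neq0 lt0r_neq0.
Qed.

Lemma inK_sqr_div s q : 0 <= s -> (s = 0 -> q = 0) -> inK (q ^+ 2 / (2 * s)) s q.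
Proof.
move=> s_ge0 sq0; have [s_eq0|s_neq0] := eqVneq s 0.
  by rewrite /inK s_eq0 sq0 // expr0n /= !(mul0r, mulr0) lexx.
split; first by rewrite divr_ge0 ?sqr_ge0 ?mulr_ge0.
by split=> //; rewrite le_eqVlt; apply/orP; left; apply/eqP; field; rewrite s_neq0.
Qed.

Lemma inK_dualE l t d a : 0 < l -> t = l - a ->
  inK (2 * l) t (- d) <-> d ^+ 2 / (4 * l) + a <= l.
Proof.
move=> l_gt0 ->; rewrite /inK sqrrN -lerBrDr ler_pdivrMr ?mulr_gt0 //.
have -> : 2 * (2 * l) * (l - a) = (l - a) * (4 * l) by ring.
split=> [[_ [_ //]]|d2_le]; split; first by rewrite mulr_ge0 // ltW.
by split=> //; rewrite -(pmulr_lge0 _ (_ : 0 < 4 * l)) ?(le_trans (sqr_ge0 d)) ?mulr_gt0.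
Qed.

End SecondOrderCone.

Section RealAnalysis.
Variable R : realType.

Lemma quadratic_le0_near (g a b : R) : g <= 0 -> 0 <= b -> g < 0 \/ a < 0 ->
  \forall t \near 0^'+, g + t * a + t ^+ 2 * b <= 0.
Proof.
move=> g_le0 b_ge0 [g_lt0|a_lt0].
  have c_gt0 : 0 < `|a| + b + 1 by have := normr_ge0 a; lra.
  near=> t.
  have t_gt0 : 0 < t by near: t; exact: nbhs_right_gt.
  have t_le1 : t <= 1 by near: t; apply: nbhs_right_le.
  have t_small : t * (`|a| + b + 1) <= - g.
    rewrite -ler_pdivlMr //; near: t; apply: nbhs_right_le.
    by apply: divr_gt0; rewrite ?oppr_gt0.
  have : t ^+ 2 * b <= t * b.
    by rewrite expr2 -mulrA; apply: ler_piMl => //; rewrite mulr_ge0 // ltW.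
  have : t * a <= t * `|a| by rewrite ler_pM2l // ler_norm.
  nra.
have b1_gt0 : 0 < b + 1 by lra.
near=> t.
have t_gt0 : 0 < t by near: t; exact: nbhs_right_gt.
have t_small : t * (b + 1) <= - a.
  rewrite -ler_pdivlMr //; near: t; apply: nbhs_right_le.
  by apply: divr_gt0; rewrite ?oppr_gt0.
nra.
Unshelve. all: by end_near.
Qed.

Lemma closed_bounded_EVT_max N (S : set 'rV[R]_N) (g : 'rV[R]_N -> R) :
  S !=set0 -> closed S -> (forall j, exists M, forall z, S z -> `|z 0 j| <= M) ->
  continuous g -> exists2 c, S c & forall z, S z -> g z <= g c.
Proof.
move=> S_neq0 S_closed S_bnd g_cont; have [M SM] := fin_all_exists S_bnd.
have S_compact : compact S.
  apply: (subclosed_compact S_closed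
    (@rV_compact _ _ (fun j => `[- M j, M j]%classic) _)) => [j|z Sz j].
    exact: segment_compact.
  by rewrite /= in_itv /= -ler_norml; apply: SM.
have [c Sc c_max] := EVT_max_rV S_neq0 S_compact (continuous_subspaceT g_cont).
by exists c => [|z Sz]; [rewrite inE in Sc | apply: c_max; rewrite inE].
Qed.

Lemma continuous_mulmx_col m n N (A : 'M[R]_(m, n)) (h : 'I_n -> 'I_N) k :
  continuous (fun z : 'rV[R]_N => (A *m \col_i z 0 (h i)) k 0).
Proof.
have -> : (fun z : 'rV[R]_N => (A *m \col_i z 0 (h i)) k 0) =
    (fun z => \sum_i A k i * z 0 (h i)).
  by apply/funext => z; rewrite mxE; apply: eq_bigr => i _; rewrite mxE.
apply: continuous_big => [|i _ z]; first exact: add_continuous.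
by apply: continuousM; [exact: cst_continuous | exact: coord_continuous].
Qed.

End RealAnalysis.

(* The two problems for arbitrary data [B1], [B2], [D], [l > 0], [f]; the problems [P_opt] and
   [D_opt] of the statement are the instances given by the point cloud, up to conversion. *)
Section ConicDuality.
Variables (R : realType) (m n : nat) (B1 B2 D : 'M[R]_(m, n)).
Variables (l : 'cV[R]_m) (f : 'cV[R]_n).
Hypothesis l_gt0 : forall k, 0 < l k 0.

Definition primal_feasible (s r q : 'cV[R]_m) : Prop :=
  nonneg s /\ nonneg r /\
  B1^T *m s = 0 /\ B2^T *m s = 0 /\ D^T *m q = f /\
  (forall k, inK (r k 0) (s k 0) (q k 0)).

Definition primal_value (s r : 'cV[R]_m) : R := dotv l s + 2 * dotv l r.

Definition primal_optimal (s r q : 'cV[R]_m) : Prop :=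
  primal_feasible s r q /\
  forall s' r' q', primal_feasible s' r' q' -> primal_value s r <= primal_value s' r'.

Definition dual_feasible (u1 u2 w : 'cV[R]_n) (t1 t2 t3 : 'cV[R]_m) : Prop :=
  nonneg t1 /\ nonneg t2 /\
  t2 + B1 *m u1 + B2 *m u2 = l /\ t3 + D *m w = 0 /\
  t1 = 2%:R *: l /\
  (forall k, inK (t1 k 0) (t2 k 0) (t3 k 0)).

Definition dual_optimal (u1 u2 w : 'cV[R]_n) (t1 t2 t3 : 'cV[R]_m) : Prop :=
  dual_feasible u1 u2 w t1 t2 t3 /\
  forall u1' u2' w' t1' t2' t3', dual_feasible u1' u2' w' t1' t2' t3' ->
    dotv f w' <= dotv f w.

Definition dual_lhs (u1 u2 w : 'cV[R]_n) k : R :=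
  (D *m w) k 0 ^+ 2 / (4 * l k 0) + (B1 *m u1 + B2 *m u2) k 0.

Definition dual_cstr (u1 u2 w : 'cV[R]_n) : Prop := forall k, dual_lhs u1 u2 w k <= l k 0.

Definition kkt (s q : 'cV[R]_m) (u1 u2 w : 'cV[R]_n) : Prop :=
  [/\ dual_cstr u1 u2 w,
      B1^T *m s = 0 /\ B2^T *m s = 0 /\ D^T *m q = f,
      forall k, s k 0 != 0 -> dual_lhs u1 u2 w k = l k 0
    & forall k, q k 0 = s k 0 * (D *m w) k 0 / (2 * l k 0)].

Lemma dual_feasibleP u1 u2 w :
  (exists t1 t2 t3, dual_feasible u1 u2 w t1 t2 t3) <-> dual_cstr u1 u2 w.
Proof.
pose t2 := l - (B1 *m u1 + B2 *m u2); pose t3 := - (D *m w).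
have inKE k : inK ((2%:R *: l) k 0) (t2 k 0) (t3 k 0) <-> dual_lhs u1 u2 w k <= l k 0.
  have -> : (2%:R *: l) k 0 = 2 * l k 0 by rewrite mxE.
  have -> : t3 k 0 = - (D *m w) k 0 by rewrite !mxE.
  by apply: inK_dualE => //; rewrite !mxE.
split=> [[t1' [t2' [t3' [_ [_ [t2E [t3E [-> t_inK]]]]]]]] k|cstr].
  apply/inKE; have -> : t2 = t2' by rewrite /t2 -t2E -(addrA t2') addrK.
  by have -> : t3 = t3' by apply/eqP; rewrite eq_sym -addr_eq0 t3E.
exists (2%:R *: l), t2, t3; split; first by move=> k; rewrite mxE mulr_ge0 // ltW.
split; first by move=> k; have [_ []] := proj2 (inKE k) (cstr k).
by rewrite -addrA subrK addNr; do 3!split=> //; move=> k; apply/inKE/cstr.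
Qed.

Definition edge_gap (s r q : 'cV[R]_m) (u1 u2 w : 'cV[R]_n) k : R :=
  cone_gap (l k 0) (r k 0) (s k 0) (q k 0) ((D *m w) k 0) ((B1 *m u1 + B2 *m u2) k 0).

Lemma duality_gap s r q u1 u2 w : B1^T *m s = 0 -> B2^T *m s = 0 -> D^T *m q = f ->
  primal_value s r - dotv f w = \sum_k edge_gap s r q u1 u2 w k.
Proof.
move=> B1s B2s Dq.
have sBu0 : dotv s (B1 *m u1 + B2 *m u2) = 0.
  by rewrite dotvDr !dotv_mulmx B1s B2s !dotv0l addr0.
rewrite /edge_gap /cone_gap !sumrB big_split /=.
have -> : \sum_k 2 * l k 0 * r k 0 = 2 * dotv l r.
  by rewrite mulr_sumr; apply: eq_bigr => k _; rewrite mulrA.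
rewrite -/(dotv l s) -/(dotv s _) -/(dotv q _).
by rewrite sBu0 subr0 dotv_mulmx Dq.
Qed.

Lemma edge_gap_ge0 s r q u1 u2 w k :
  primal_feasible s r q -> dual_cstr u1 u2 w -> 0 <= edge_gap s r q u1 u2 w k.
Proof. by move=> [_ [_ [_ [_ [_ cone]]]]] cstr; apply: cone_gap_ge0 (cstr k). Qed.

Lemma weak_duality s r q u1 u2 w :
  primal_feasible s r q -> dual_cstr u1 u2 w -> dotv f w <= primal_value s r.
Proof.
move=> feas cstr; have [_ [_ [B1s [B2s [Dq _]]]]] := feas.
rewrite -subr_ge0 (@duality_gap s r q u1 u2 w B1s B2s Dq).
by apply: sumr_ge0 => k _; apply: edge_gap_ge0.
Qed.

(* The least [r] with [(r, s, q)] in the cone; where [s k 0 = 0] the junk value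
   [_ / 0 = 0] is the right one, since [q k 0 = 0] there. *)
Definition min_r (s q : 'cV[R]_m) : 'cV[R]_m := \col_k (q k 0 ^+ 2 / (2 * s k 0)).

Lemma kkt_primal_feasible s q u1 u2 w :
  nonneg s -> kkt s q u1 u2 w -> primal_feasible s (min_r s q) q.
Proof.
move=> s_ge0 [_ [B1s [B2s Dq]] _ qE].
have cone k : inK (min_r s q k 0) (s k 0) (q k 0).
  by rewrite mxE; apply: inK_sqr_div => // s0; rewrite qE s0 !mul0r.
split=> //; split=> [k|]; first by case: (cone k).
by split=> //; split=> //; split.
Qed.

Lemma kkt_value s q u1 u2 w :
  kkt s q u1 u2 w -> primal_value s (min_r s q) = dotv f w.
Proof.
move=> [_ [B1s [B2s Dq]] tight qE]; apply/eqP; rewrite -subr_eq0.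
rewrite (@duality_gap s (min_r s q) q u1 u2 w B1s B2s Dq); apply/eqP/big1 => k _.
by rewrite /edge_gap mxE; apply: cone_gap_kkt => //; apply: tight.
Qed.

Lemma kkt_of_value s r q u1 u2 w : primal_feasible s r q -> dual_cstr u1 u2 w ->
  primal_value s r = dotv f w -> kkt s q u1 u2 w.
Proof.
move=> feas cstr val; have [_ [_ [B1s [B2s [Dq cone]]]]] := feas.
have gap0 k : edge_gap s r q u1 u2 w k = 0.
  apply/eqP; move: (@duality_gap s r q u1 u2 w B1s B2s Dq).
  rewrite val subrr => /esym/eqP; rewrite psumr_eq0 => [/allP/(_ k)|j _].
    by apply; rewrite mem_index_enum.
  exact: edge_gap_ge0.
have kkt_k k := cone_gap_eq0 (l_gt0 k) (cone k) (cstr k) (gap0 k).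
by split=> // k; [exact: (kkt_k k).1 | exact: (kkt_k k).2].
Qed.

(* The three dual unknowns read off one row vector, where closed bounded sets are compact. *)
Definition dual_of_row (z : 'rV[R]_(n + n + n)) : 'cV[R]_n * 'cV[R]_n * 'cV[R]_n :=
  (\col_i z 0 (lshift n (lshift n i)), \col_i z 0 (lshift n (rshift n i)),
   \col_i z 0 (rshift (n + n) i)).

Lemma dual_of_row_mx u1 u2 w : dual_of_row (row_mx (row_mx u1^T u2^T) w^T) = (u1, u2, w).
Proof. by congr (_, _, _); apply/colP => i; rewrite mxE ?row_mxEl ?row_mxEr mxE. Qed.

Lemma dual_max_exists :
  (forall i, exists M, forall u1 u2 w, dual_cstr u1 u2 w ->
     [/\ `|u1 i 0| <= M, `|u2 i 0| <= M & `|w i 0| <= M]) ->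
  exists u1 u2 w, dual_cstr u1 u2 w /\
    forall u1' u2' w', dual_cstr u1' u2' w' -> dotv f w' <= dotv f w.
Proof.
move=> bnd.
pose g k z := dual_lhs (dual_of_row z).1.1 (dual_of_row z).1.2 (dual_of_row z).2 k.
pose S := [set z | forall k, g k z <= l k 0].
have g_cont k : continuous (g k).
  have -> : g k = fun z => (D *m (dual_of_row z).2) k 0 ^+ 2 / (4 * l k 0)
      + ((B1 *m (dual_of_row z).1.1) k 0 + (B2 *m (dual_of_row z).1.2) k 0).
    by apply/funext => z; rewrite /g /dual_lhs [X in _ + X]mxE.
  move=> z; apply: (@continuousD _ R^o _ (fun z => _) (fun z => _)).
    apply: (@continuousM _ _ (fun z => _) (fun=> _)); last exact: cst_continuous.
    by apply: (@continuousM _ _ (fun z => _) (fun z => _)); apply: continuous_mulmx_col.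
  by apply: (@continuousD _ R^o _ (fun z => _) (fun z => _)); apply: continuous_mulmx_col.
have S_closed : closed S.
  have -> : S = \bigcap_(k in setT) (g k @^-1` [set x | x <= l k 0]).
    by apply/seteqP; split=> [z Sz k _|z Sz k]; apply: Sz.
  apply: closed_bigI => k _.
  exact: (continuous_closedP (g k)).1 (g_cont k) _ (@closed_le _ (l k 0)).
have S_row u1 u2 w : dual_cstr u1 u2 w -> S (row_mx (row_mx u1^T u2^T) w^T).
  by rewrite /S /mkset /g dual_of_row_mx.
have S_neq0 : S !=set0.
  exists (row_mx (row_mx 0^T 0^T) 0^T); apply: S_row => k.
  by rewrite /dual_lhs !mulmx0 addr0 mxE expr0n mul0r add0r ltW.
have S_bnd j : exists M, forall z, S z -> `|z 0 j| <= M.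
  rewrite -(splitK j); case: (fintype.split j) => [j12|i] /=; last first.
    by have [M bndM] := bnd i; exists M => z /bndM[_ _]; rewrite mxE.
  rewrite -(splitK j12); case: (fintype.split j12) => [i|i] /=.
    by have [M bndM] := bnd i; exists M => z /bndM[+ _ _]; rewrite mxE.
  by have [M bndM] := bnd i; exists M => z /bndM[_ + _]; rewrite mxE.
have obj_cont : continuous (fun z => dotv f (dual_of_row z).2).
  have -> : (fun z => dotv f (dual_of_row z).2) =
      fun z => (f^T *m (dual_of_row z).2) 0 0 by apply/funext => z; rewrite dotvE.
  exact: continuous_mulmx_col.
have [c Sc c_max] := closed_bounded_EVT_max S_neq0 S_closed S_bnd obj_cont.
exists (dual_of_row c).1.1, (dual_of_row c).1.2, (dual_of_row c).2.
by split=> // u1 u2 w cstr; have := c_max _ (S_row _ _ _ cstr); rewrite dual_of_row_mx.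
Qed.

Local Notation point := ('cV[R]_n * 'cV[R]_n * 'cV[R]_n)%type.

Definition cstr_at (z : point) k : R := dual_lhs z.1.1 z.1.2 z.2 k - l k 0.

Definition cstr_grad (z h : point) k : R :=
  (B1 *m h.1.1 + B2 *m h.1.2) k 0 + (D *m z.2) k 0 * (D *m h.2) k 0 / (2 * l k 0).

Definition kkt_flux (s : 'cV[R]_m) (w : 'cV[R]_n) : 'cV[R]_m :=
  \col_k (s k 0 * (D *m w) k 0 / (2 * l k 0)).

Lemma cstr_grad_scalar z k : scalar (fun h => cstr_grad z h k).
Proof.
move=> a h h'; rewrite /cstr_grad /= !mulmxDr -!scalemxAr !mxE.
by field; rewrite lt0r_neq0.
Qed.

Lemma cstr_at_step z h t k : cstr_at (z + t *: h) k =
  cstr_at z k + t * cstr_grad z h k + t ^+ 2 * ((D *m h.2) k 0 ^+ 2 / (4 * l k 0)).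
Proof.
rewrite /cstr_at /cstr_grad /dual_lhs /= !mulmxDr -!scalemxAr !mxE.
by field; rewrite lt0r_neq0.
Qed.

Lemma cstr_grad_opp z k : cstr_grad z (- z) k <= - l k 0 - cstr_at z k.
Proof.
rewrite /cstr_grad /cstr_at /dual_lhs /= !mulmxN !mxE.
set d := \sum_j D k j * z.2 j 0.
have : 0 <= d ^+ 2 / (4 * l k 0) by rewrite divr_ge0 ?sqr_ge0 // mulr_ge0 // ltW.
suff -> : d * - d / (2 * l k 0) = - 2 * (d ^+ 2 / (4 * l k 0)) by lra.
by field; rewrite lt0r_neq0.
Qed.

Lemma sum_cstr_grad (s : 'cV[R]_m) z h : \sum_k s k 0 * cstr_grad z h k =
  dotv (B1^T *m s) h.1.1 + dotv (B2^T *m s) h.1.2 + dotv (D^T *m kkt_flux s z.2) h.2.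
Proof.
rewrite -!dotv_mulmx -dotvDr /dotv -big_split; apply: eq_bigr => k _ /=.
by rewrite /cstr_grad /kkt_flux !mxE; field; rewrite lt0r_neq0.
Qed.

Lemma feasible_step z h : (forall k, cstr_at z k <= 0) ->
  (forall k, cstr_at z k < 0 \/ cstr_grad z h k < 0) ->
  exists2 t, 0 < t & forall k, cstr_at (z + t *: h) k <= 0.
Proof.
move=> feas descent.
have : \forall t \near 0^'+, 0 < t /\ forall k, cstr_at (z + t *: h) k <= 0.
  near=> t; split; first by near: t; exact: nbhs_right_gt.
  near: t; apply: filter_forall => k; near=> t; rewrite cstr_at_step; near: t.
  apply: quadratic_le0_near => //.
  by apply: divr_ge0; [exact: sqr_ge0 | rewrite mulr_ge0 // ltW].
by move=> /(filter_ex (FF := at_right_proper_filter 0)) [t [t_gt0 step]]; exists t.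
Unshelve. all: by end_near.
Qed.

Lemma max_no_ascent u1 u2 w (h : point) :
  (forall u1' u2' w', dual_cstr u1' u2' w' -> dotv f w' <= dotv f w) ->
  dual_cstr u1 u2 w -> (forall k, cstr_at (u1, u2, w) k < 0 \/ cstr_grad (u1, u2, w) h k < 0) ->
  dotv f h.2 <= 0.
Proof.
move=> w_max cstr descent; rewrite leNgt; apply/negP => psi_h.
have feas k : cstr_at (u1, u2, w) k <= 0 by rewrite subr_le0; apply: cstr.
have [t t_gt0 step] := feasible_step feas descent.
have step_cstr : dual_cstr (u1 + t *: h.1.1) (u2 + t *: h.1.2) (w + t *: h.2).
  by move=> k; rewrite -subr_le0; apply: step.
have := w_max _ _ _ step_cstr; rewrite addrC dotv_scalar.
by have := mulr_gt0 t_gt0 psi_h; lra.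
Qed.

Lemma kkt_at_max u1 u2 w : dual_cstr u1 u2 w ->
  (forall u1' u2' w', dual_cstr u1' u2' w' -> dotv f w' <= dotv f w) ->
  exists2 s, nonneg s & kkt s (kkt_flux s w) u1 u2 w.
Proof.
move=> cstr w_max; pose z : point := (u1, u2, w).
pose active k := cstr_at z k == 0.
have slater k : active k -> cstr_grad z (- z) k < 0.
  move=> /eqP act; apply: le_lt_trans (cstr_grad_opp z k) _.
  by rewrite act subr0 oppr_lt0.
have psi_scalar : scalar (fun h : point => dotv f h.2) by move=> a h h'; apply: dotv_scalar.
have [[lam lam_ge0 psiE]|[h h_desc psi_h]] :=
  @farkas_strict _ _ _ active (fun k h => cstr_grad z h k) _ _
    (cstr_grad_scalar z) psi_scalar slater; last first.
  suff : dotv f h.2 <= 0 by rewrite leNgt psi_h.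
  apply: (max_no_ascent w_max cstr) => k; have [act|inact] := eqVneq (cstr_at z k) 0.
    by right; apply: h_desc; apply/eqP.
  by left; rewrite lt_neqAle inact subr_le0; apply: cstr.
pose s := \col_k (if active k then lam k else 0).
have dualE h1 h2 h3 : dotv f h3 =
    dotv (B1^T *m s) h1 + dotv (B2^T *m s) h2 + dotv (D^T *m kkt_flux s w) h3.
  rewrite -(sum_cstr_grad s z (h1, h2, h3)) (psiE (h1, h2, h3)) big_mkcond.
  by apply: eq_bigr => k _; rewrite mxE; case: (active k); rewrite ?mul0r.
exists s; first by move=> k; rewrite mxE; case: (active k).
split=> //; first split.
- apply: dotv_inj => h; rewrite dotv0l.
  by have := dualE h 0 0; rewrite !dotv0r !addr0 => /esym.
- split; apply: dotv_inj => h; last by rewrite (dualE 0 0 h) !dotv0r !add0r.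
  by rewrite dotv0l; have := dualE 0 h 0; rewrite !dotv0r add0r addr0 => /esym.
- move=> k; rewrite mxE; case: ifP => [/eqP act _|]; last by rewrite eqxx.
  by apply/eqP; rewrite -subr_eq0; apply/eqP.
- by move=> k; rewrite mxE.
Qed.

Lemma optimal_of_kkt s q u1 u2 w : nonneg s -> kkt s q u1 u2 w ->
  primal_optimal s (min_r s q) q /\ exists t1 t2 t3, dual_optimal u1 u2 w t1 t2 t3.
Proof.
move=> s_ge0 kkt_sq; have feas := kkt_primal_feasible s_ge0 kkt_sq.
have val := kkt_value kkt_sq; have [cstr _ _ _] := kkt_sq.
split; first by split=> // s' r' q' feas'; rewrite val; exact: weak_duality feas' cstr.
have [t1 [t2 [t3 dfeas]]] := proj2 (dual_feasibleP u1 u2 w) cstr.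
exists t1, t2, t3; split=> // u1' u2' w' t1' t2' t3' dfeas'; rewrite -val.
apply: (weak_duality (u1 := u1') (u2 := u2') feas).
by apply/dual_feasibleP; exists t1', t2', t3'.
Qed.

Lemma kkt_of_optimal s r q u1 u2 w t1 t2 t3 :
  (exists s0 q0 u10 u20 w0, nonneg s0 /\ kkt s0 q0 u10 u20 w0) ->
  primal_optimal s r q -> dual_optimal u1 u2 w t1 t2 t3 -> kkt s q u1 u2 w.
Proof.
move=> [s0 [q0 [u10 [u20 [w0 [s0_ge0 kkt0]]]]]] [feas s_min] [dfeas w_max].
have [[feas0 _] [t10 [t20 [t30 [dfeas0 _]]]]] := optimal_of_kkt s0_ge0 kkt0.
have cstr : dual_cstr u1 u2 w by apply/dual_feasibleP; exists t1, t2, t3.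
apply: (kkt_of_value feas cstr); apply/eqP.
rewrite eq_le (weak_duality feas cstr) andbT (le_trans (s_min _ _ _ feas0)) //.
by rewrite (kkt_value kkt0) (w_max _ _ _ _ _ _ dfeas0).
Qed.

Theorem conic_duality :
  (forall i, exists M, forall u1 u2 w, dual_cstr u1 u2 w ->
     [/\ `|u1 i 0| <= M, `|u2 i 0| <= M & `|w i 0| <= M]) ->
  (exists Z : R,
     (exists s r q, primal_optimal s r q /\ primal_value s r = Z) /\
     (exists u1 u2 w t1 t2 t3, dual_optimal u1 u2 w t1 t2 t3 /\ dotv f w = Z)) /\
  (forall s q u1 u2 w, nonneg s ->
     ((exists r, primal_optimal s r q) /\
      (exists t1 t2 t3, dual_optimal u1 u2 w t1 t2 t3)) <-> kkt s q u1 u2 w).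
Proof.
move=> bnd; have [u1 [u2 [w [cstr w_max]]]] := dual_max_exists bnd.
have [s s_ge0 kkt_sw] := kkt_at_max cstr w_max.
have [popt [t1 [t2 [t3 dopt]]]] := optimal_of_kkt s_ge0 kkt_sw.
split.
  exists (dotv f w); split; last by exists u1, u2, w, t1, t2, t3.
  by exists s, (min_r s (kkt_flux s w)), (kkt_flux s w); rewrite (kkt_value kkt_sw).
move=> s' q' u1' u2' w' s'_ge0; split=> [[[r' popt'] [t1' [t2' [t3' dopt']]]]|kkt'].
  by apply: kkt_of_optimal popt' dopt'; exists s, (kkt_flux s w), u1, u2, w.
by have [popt' dopt'] := optimal_of_kkt s'_ge0 kkt'; split=> //; exists (min_r s' q').
Qed.

End ConicDuality.

Section ConvexHull.
Variable R : realType.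
Implicit Types (A : set (R * R)) (x y z : R * R).

Lemma conv_hull_neq0 A x : conv_hull A x -> A !=set0.
Proof.
case=> [[|k] [c [a [_ [c1 [Aa _]]]]]]; last by exists (a ord0).
by move: c1; rewrite big_ord0 => /eqP; rewrite eq_sym oner_eq0.
Qed.

Lemma conv_hull_halfplane A x (v1 v2 C : R) :
  (forall y, A y -> v1 * (x.1 - y.1) + v2 * (x.2 - y.2) <= C) ->
  forall z, conv_hull A z -> v1 * (x.1 - z.1) + v2 * (x.2 - z.2) <= C.
Proof.
move=> halfA _ [k [c [a [c_ge0 [c1 [Aa ->]]]]]] /=.
rewrite -[C]mul1r -c1 mulr_suml.
apply: le_trans (ler_sum _ (fun i _ => ler_wpM2l (c_ge0 i) (halfA _ (Aa i)))).
have -> : \sum_i c i * (v1 * (x.1 - (a i).1) + v2 * (x.2 - (a i).2)) =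
    (v1 * x.1 + v2 * x.2) * \sum_i c i
    - (v1 * \sum_i c i * (a i).1 + v2 * \sum_i c i * (a i).2).
  rewrite !mulr_sumr -big_split -sumrB /=; apply: eq_bigr => i _; ring.
by rewrite c1 mulr1 le_eqVlt; apply/orP; left; apply/eqP; ring.
Qed.

Lemma interior_conv_hull_bound A x : interior (conv_hull A) x ->
  exists2 e, 0 < e & forall v1 v2 C,
    (forall y, A y -> v1 * (x.1 - y.1) + v2 * (x.2 - y.2) <= C) ->
    e * (`|v1| + `|v2|) <= C.
Proof.
move=> /nbhs_ballP[e e_gt0 ball_e]; exists (e / 2) => [|v1 v2 C halfA].
  by rewrite divr_gt0.
(* Test the half-plane condition at the corner of the ball opposite to [(v1, v2)]. *)
pose z := (x.1 - e / 2 * Num.sg v1, x.2 - e / 2 * Num.sg v2).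
have sg_small (v y : R) : `|y - (y - e / 2 * Num.sg v)| < e.
  rewrite opprB addrCA subrr addr0 normrM normr_sg gtr0_norm ?divr_gt0 //.
  by case: (v != 0); rewrite /= ?mulr1 ?mulr0 // ltr_pdivrMr // ltr_pMr // ltr1n.
have z_ball : ball x e z by split; rewrite /= -ball_normE /ball_ /= sg_small.
have := conv_hull_halfplane halfA (ball_e z z_ball).
suff -> : v1 * (x.1 - z.1) + v2 * (x.2 - z.2) = e / 2 * (`|v1| + `|v2|) by [].
by rewrite /z /= !normrEsg; ring.
Qed.

End ConvexHull.

Section NodalVectors.
Variables (R : realType) (nbar n m : nat) (p : 'I_nbar -> (R * R)%type).
Variables (chi : 'I_n -> 'I_nbar) (chm chp : 'I_m -> 'I_nbar).
Hypothesis chi_inj : injective chi.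

Local Notation l := (lvec p chm chp).

(* The function on all of X encoded by [u], vanishing off the interior nodes [chi i]. *)
Definition extend0 (u : 'cV[R]_n) (a : 'I_nbar) : R := \sum_i (a == chi i)%:R * u i 0.

Lemma extend0_chi u i : extend0 u (chi i) = u i 0.
Proof.
rewrite /extend0 (bigD1 i) //= eqxx mul1r big1 ?addr0 // => j ji.
by rewrite (inj_eq chi_inj) eq_sym (negPf ji) mul0r.
Qed.

Lemma extend0_out u a : (forall i, chi i != a) -> extend0 u a = 0.
Proof.
by move=> a_out; rewrite /extend0 big1 // => i _; rewrite eq_sym (negPf (a_out i)) mul0r.
Qed.

Lemma Dmat_mulE w k :
  (Dmat R chi chm chp *m w) k 0 = extend0 w (chp k) - extend0 w (chm k).
Proof. by rewrite mxE /extend0 -sumrB; apply: eq_bigr => i _; rewrite mxE /inc mulrBl. Qed.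

Lemma Bmat_mulE u1 u2 k : l k 0 != 0 ->
  (Bmat1 p chi chm chp *m u1 + Bmat2 p chi chm chp *m u2) k 0 * l k 0 =
    (extend0 u1 (chp k) - extend0 u1 (chm k)) * ((p (chp k)).1 - (p (chm k)).1)
  + (extend0 u2 (chp k) - extend0 u2 (chm k)) * ((p (chp k)).2 - (p (chm k)).2).
Proof.
rewrite /Bmat1 /Bmat2 /extend0 !mxE => l_neq0; rewrite mulrDl -!sumrB !mulr_suml.
by congr (_ + _); apply: eq_bigr => i _; rewrite !mxE /inc; field.
Qed.

Lemma lvec_gt0 : injective p -> (forall k, chm k != chp k) -> forall k, 0 < l k 0.
Proof.
move=> p_inj chm_chp k; rewrite mxE /edist sqrtr_gt0 lt_def addr_ge0 ?sqr_ge0 // andbT.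
have : p (chp k) != p (chm k) by rewrite (inj_eq p_inj) eq_sym.
apply: contra; rewrite paddr_eq0 ?sqr_ge0 // !sqrf_eq0 !subr_eq0 => /andP[/eqP e1 /eqP e2].
by apply/eqP; move: e1 e2; case: (p (chp k)) (p (chm k)) => ? ? [? ?] /= -> ->.
Qed.

End NodalVectors.

Section DualBounded.
Variables (R : realType) (Omega : set (R * R)) (nbar n m : nat).
Variables (p : 'I_nbar -> (R * R)%type) (chi : 'I_n -> 'I_nbar) (chm chp : 'I_m -> 'I_nbar).
Hypothesis p_inj : injective p.
Hypothesis chi_inj : injective chi.
Hypothesis chm_neq_chp : forall k, chm k != chp k.
Hypothesis bdry_chi : forall a, ~ bdry Omega (p a) <-> exists i, chi i = a.
Hypothesis edges : forall a b, a != b ->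
  exists! k, (chm k = a /\ chp k = b) \/ (chm k = b /\ chp k = a).
Hypothesis interior_conv : forall i,
  interior (conv_hull [set x | exists a, x = p a /\ bdry Omega x]) (p (chi i)).

Local Notation l := (lvec p chm chp).
Local Notation cstr :=
  (dual_cstr (Bmat1 p chi chm chp) (Bmat2 p chi chm chp) (Dmat R chi chm chp) l).

Lemma edge_to_bdry i b : bdry Omega (p b) -> exists k, (forall i', chi i' != b) /\
  ((chm k = chi i /\ chp k = b) \/ (chm k = b /\ chp k = chi i)).
Proof.
move=> b_bdry; have b_out i' : chi i' != b.
  by apply/eqP => chi_b; apply: (proj2 (bdry_chi b)) b_bdry; exists i'.
by have [k [edge _]] := edges (b_out i); exists k.
Qed.

Lemma edge_cstr u1 u2 w i b k : (forall i', chi i' != b) ->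
  (chm k = chi i /\ chp k = b) \/ (chm k = b /\ chp k = chi i) -> cstr u1 u2 w ->
  w i 0 ^+ 2 / 4 + (u1 i 0 * ((p (chi i)).1 - (p b).1) + u2 i 0 * ((p (chi i)).2 - (p b).2))
    <= l k 0 ^+ 2.
Proof.
move=> b_out edge cstr_u; have l_gt0 := lvec_gt0 p_inj chm_neq_chp k.
have := cstr_u k; rewrite /dual_lhs -(ler_pM2r l_gt0) mulrDl.
rewrite (Bmat_mulE chi u1 u2 (lt0r_neq0 l_gt0)) Dmat_mulE.
have -> : forall d : R, d ^+ 2 / (4 * l k 0) * l k 0 = d ^+ 2 / 4.
  by move=> d; field; rewrite lt0r_neq0.
by case: edge => [[-> ->]|[-> ->]]; rewrite !extend0_chi // !(extend0_out _ b_out) expr2; lra.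
Qed.

Lemma dual_cstr_bounded i : exists M, forall u1 u2 w, cstr u1 u2 w ->
  [/\ `|u1 i 0| <= M, `|u2 i 0| <= M & `|w i 0| <= M].
Proof.
set x := p (chi i); pose C := \sum_k l k 0 ^+ 2.
have C_ge0 : 0 <= C by apply: sumr_ge0 => k _; apply: sqr_ge0.
have l_le k : l k 0 ^+ 2 <= C.
  by rewrite /C (bigD1 k) //= lerDl; apply: sumr_ge0 => j _; apply: sqr_ge0.
have [e e_gt0 e_bound] := interior_conv_hull_bound (interior_conv i).
have [_ [b0 [-> b0_bdry]]] := conv_hull_neq0 (interior_subset (interior_conv i)).
have [k0 [b0_out edge0]] := edge_to_bdry i b0_bdry.
pose K := `|x.1 - (p b0).1| + `|x.2 - (p b0).2|.
have K_ge0 : 0 <= K by rewrite addr_ge0.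
pose S := C / e.
have S_ge0 : 0 <= S by rewrite divr_ge0 // ltW.
exists (S + 1 + 4 * (C + S * K)) => u1 u2 w cstr_u.
have u_le : `|u1 i 0| + `|u2 i 0| <= S.
  rewrite ler_pdivlMr // mulrC; apply: e_bound => _ [b [-> b_bdry]].
  have [k [b_out edge]] := edge_to_bdry i b_bdry.
  by have := edge_cstr b_out edge cstr_u; have := l_le k; have := sqr_ge0 (w i 0); lra.
have w2_le : w i 0 ^+ 2 <= 4 * (C + S * K).
  have abs_prod (a c : R) : - (a * c) <= `|a| * `|c| by rewrite -normrM -normrN ler_norm.
  have := abs_prod (u1 i 0) (x.1 - (p b0).1); have := abs_prod (u2 i 0) (x.2 - (p b0).2).
  have := edge_cstr b0_out edge0 cstr_u; have := l_le k0.
  have : (`|u1 i 0| + `|u2 i 0|) * K <= S * K by rewrite ler_wpM2r.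
  rewrite /K; have := normr_ge0 (u1 i 0); have := normr_ge0 (u2 i 0).
  have := normr_ge0 (x.1 - (p b0).1); have := normr_ge0 (x.2 - (p b0).2); nra.
have w_le : `|w i 0| <= 1 + w i 0 ^+ 2.
  by rewrite -real_normK ?num_real //; have := sqr_ge0 (`|w i 0| - 1); nra.
by split; have := normr_ge0 (u1 i 0); have := normr_ge0 (u2 i 0); nra.
Qed.

End DualBounded.

Theorem theorem6p1 (R : realType) (Omega : set (R * R)%type)
  (nbar n m : nat) (p : 'I_nbar -> (R * R)%type) (chi : 'I_n -> 'I_nbar)
  (chm chp : 'I_m -> 'I_nbar) (f : 'cV[R]_n) :
  (* Omega is a bounded domain of R^2 *)
  open Omega -> connected Omega -> Omega !=set0 -> bounded_set Omega ->
  (* X = {p a | a < nbar} is a finite subset of closure Omega, enumerated injectively *)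
  injective p -> (forall a, closure Omega (p a)) ->
  (* chi enumerates X \ bdry Omega *)
  injective chi ->
  (forall a, ~ bdry Omega (p a) <-> exists i, chi i = a) ->
  (* k |-> {chi_-(k), chi_+(k)} enumerates the unordered pairs of distinct points *)
  (forall k, chm k != chp k) ->
  (forall a b, a != b -> exists! k,
      (chm k = a /\ chp k = b) \/ (chm k = b /\ chp k = a)) ->
  (* X \ bdry Omega is contained in int(conv(X /\ bdry Omega)) *)
  (forall i, interior (conv_hull [set x | exists a, x = p a /\ bdry Omega x])
                      (p (chi i))) ->
  (exists Z : R,
     (exists s r q, P_opt p chi chm chp f s r q /\ P_obj p chm chp s r = Z) /\
     (exists u1 u2 w t1 t2 t3, D_opt p chi chm chp f u1 u2 w t1 t2 t3 /\
                               D_obj f w = Z)) /\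
  (forall (s q : 'cV[R]_m) (u1 u2 w : 'cV[R]_n), nonneg s ->
     ((exists r, P_opt p chi chm chp f s r q) /\
      (exists t1 t2 t3, D_opt p chi chm chp f u1 u2 w t1 t2 t3))
     <->
     [/\ forall k, ((Dmat R chi chm chp *m w) k 0) ^+ 2 / (4 * lvec p chm chp k 0)
                   + (Bmat1 p chi chm chp *m u1 + Bmat2 p chi chm chp *m u2) k 0
                   <= lvec p chm chp k 0,
         (Bmat1 p chi chm chp)^T *m s = 0 /\ (Bmat2 p chi chm chp)^T *m s = 0 /\
           (Dmat R chi chm chp)^T *m q = f,
         forall k, s k 0 != 0 ->
           ((Dmat R chi chm chp *m w) k 0) ^+ 2 / (4 * lvec p chm chp k 0)
           + (Bmat1 p chi chm chp *m u1 + Bmat2 p chi chm chp *m u2) k 0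
           = lvec p chm chp k 0
       & forall k, q k 0 = s k 0 * (Dmat R chi chm chp *m w) k 0
                           / (2 * lvec p chm chp k 0)]).
Proof.
move=> _ _ _ _ p_inj _ chi_inj bdry_chi chm_neq_chp edges interior_conv.
apply: conic_duality; first exact: lvec_gt0.
exact: dual_cstr_bounded.
Qed.
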